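(* Let $x_1,\ldots,x_m$ be arbitrary positive integers and let $ES(x_1,\ldots,x_m)$ denote the number of sign vectors $(\varepsilon_1,\ldots,\varepsilon_m)\in\{-1,1\}^m$ with $\sum_{i=1}^m\varepsilon_i x_i=0$. Then $$ES(x_1,\ldots,x_m)\le 2^m\left(\frac{(2m-1)!!}{(2m)!!}\right)^{1/2}=\left(2\binom{2m-1}{m}\right)^{1/2}.$$ In particular, for every positive integer $m$, $J_m\le\left(2\binom{2m+1}{m+1}\right)^{1/2}$, where $J_m$ is the number of $(\delta_0,\ldots,\delta_m)\in\{-1,1\}^{m+1}$ with $\sum_{i=0}^m\delta_i\binom{m}{i}=0$.
   Context: $k!!$ denotes the double factorial, the product of all positive integers $\le k$ having the same parity as $k$. *)

From HB Require Import structures.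
From mathcomp Require Import all_boot all_order all_algebra.
Set Implicit Arguments. Unset Strict Implicit. Unset Printing Implicit Defensive.
Import Order.TTheory GRing.Theory Num.Theory.

Fixpoint dfact (k : nat) : nat :=
  match k with
  | 0 => 1
  | 1 => 1
  | (k'.+2) as n => n * dfact k'
  end.

(* A sign vector in {-1,1}^n is encoded by e : {ffun 'I_n -> bool},
   with coordinate i equal to (-1)^(e i), i.e. true |-> -1, false |-> 1. *)
Definition sgn (b : bool) : int := if b then (-1)%R else 1%R.

Definition ES (m : nat) (x : 'I_m -> nat) : nat :=
  #|[set e : {ffun 'I_m -> bool} | (\sum_(i < m) sgn (e i) * (x i)%:Z == 0)%R]|.

Definition J (m : nat) : nat :=
  #|[set e : {ffun 'I_m.+1 -> bool} |
      (\sum_(i < m.+1) sgn (e i) * ('C(m, i))%:Z == 0)%R]|.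

(* Encode a sign vector by the set S of indices carrying the sign -1. The
   signed sum vanishes iff S has weight exactly half of the total weight, so
   all such sets have equal weight; as the weights are positive, no one of
   them strictly contains another.  By Sperner's theorem (proved via the LYM
   inequality) there are at most max_j C(m, j) of them, and C(m, j)^2 is a
   single term of Vandermonde's sum C(2m, m) = sum_i C(m, i) C(m, m - i).
   Finally C(2m, m) = 2 C(2m-1, m) = 4^m (2m-1)!!/(2m)!!, since
   (2m-1)!! (2m)!! = (2m)! and (2m)!! = 2^m m!. *)

From HB Require Import structures.
From mathcomp Require Import all_boot all_order all_algebra.
From mathcomp Require Import zify.
Import Order.TTheory GRing.Theory Num.Theory.

Definition antichain {T : finType} (A : {set {set T}}) : Prop :=
  {in A &, forall S S' : {set T}, S \subset S' -> S = S'}.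

Section LYM.

Context {T : finType}.
Implicit Types (X S : {set T}) (A : {set {set T}}).

Lemma antichain_top {X A} : {in A, forall S, S \subset X} -> antichain A ->
  X \in A -> A = [set X].
Proof.
move=> subA antiA XA; apply/setP => S; rewrite inE.
by apply/idP/eqP => [SA | ->] //; exact: antiA (subA S SA).
Qed.

(* Each S of size k is counted once for every x in X outside S, i.e.
   n.+1 - k times, and (n.+1 - k) * (n - k)`! = (n.+1 - k)`!. *)
Lemma lym_double_count {n X A} : #|X| = n.+1 -> X \notin A ->
  {in A, forall S, S \subset X} ->
  \sum_(S in A) #|S|`! * (n.+1 - #|S|)`! =
  \sum_(x in X) \sum_(S in A | x \notin S) #|S|`! * (n - #|S|)`!.
Proof.
move=> cardX XA subA.
rewrite (exchange_big_dep (mem A)) /= => [|x S _ /andP[] //].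
apply: eq_bigr => S SA.
have ltSX : #|S| < n.+1.
  by rewrite -cardX proper_card // properEneq subA // andbT; apply: contraNneq XA => <-.
rewrite (eq_bigl (mem (X :\: S))) => [|x]; last by rewrite !inE SA andbC.
by rewrite sum_nat_const cardsD (setIidPr (subA S SA)) cardX subSn // factS; lia.
Qed.

Lemma lym_inequality X A : {in A, forall S, S \subset X} -> antichain A ->
  \sum_(S in A) #|S|`! * (#|X| - #|S|)`! <= #|X|`!.
Proof.
move cardX: #|X| => n; elim: n X A cardX => [|n IH] X A cardX subA antiA.
all: have [XA | XA] := boolP (X \in A).
- by rewrite (antichain_top subA antiA XA) big_set1 cardX.
- rewrite big_pred0 // => S; apply/negbTE; apply: contra XA => SA.
  suff <- : S = X by [].
  by apply/eqP; rewrite eqEcard subA // cardX.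
- by rewrite (antichain_top subA antiA XA) big_set1 cardX subnn muln1.
rewrite (lym_double_count cardX XA subA) factS -cardX -sum_nat_const.
apply: leq_sum => x Xx.
rewrite (eq_bigl (mem [set S in A | x \notin S])) => [|S]; last by rewrite !inE.
apply: (IH (X :\ x)) => [|S|S S'].
- by move: cardX; rewrite (cardsD1 x X) Xx add1n => -[].
- by rewrite !inE subsetD1 => /andP[SA ->]; rewrite subA.
- by rewrite !inE => /andP[SA _] /andP[S'A _]; exact: antiA.
Qed.

Lemma sperner A : antichain A -> #|A| <= \max_(j < #|T|.+1) 'C(#|T|, j).
Proof.
move=> antiA; set M := \max_(j < _) _.
rewrite -(leq_pmul2r (fact_gt0 #|T|)) -sum_nat_const.
apply: (@leq_trans (\sum_(S in A) M * (#|S|`! * (#|T| - #|S|)`!))).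
  apply: leq_sum => S _; have leST : #|S| <= #|T| by exact: max_card.
  rewrite -{1}(bin_fact leST) leq_mul2r; apply/orP; right.
  have := @bigop.leq_bigmax _ (fun j : 'I_#|T|.+1 => 'C(#|T|, j)) (inord #|S|).
  by rewrite inordK.
rewrite -big_distrr leq_mul2l -cardsT; apply/orP; right.
by apply: lym_inequality => // S _; exact: subsetT.
Qed.

End LYM.

Lemma equal_weight_antichain (T : finType) (x : T -> nat) (A : {set {set T}}) :
  (forall i, 0 < x i) ->
  {in A &, forall S S' : {set T}, \sum_(i in S) x i = \sum_(i in S') x i} -> antichain A.
Proof.
move=> x_gt0 eqw S S' SA S'A sSS'; apply/eqP; rewrite eqEsubset sSS' -setD_eq0.
have := eqw S S' SA S'A; rewrite [RHS](big_setID S) (setIidPr sSS') -[LHS]addn0.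
move/addnI/esym => w0; apply: contraT => /set0Pn[i iD].
by move: w0 (x_gt0 i); rewrite (bigD1 i iD) /=; lia.
Qed.

Lemma sgn_sum_eq0 (T : finType) (x : T -> nat) (e : T -> bool) :
  (\sum_i sgn (e i) * Posz (x i) == 0)%R = ((\sum_(i | e i) x i).*2 == \sum_i x i).
Proof.
rewrite (bigID e) /= -addnn [\sum_i x i](bigID e) /= eqn_add2l.
rewrite (eq_bigr (fun i => - Posz (x i))%R) => [|i ->]; last by rewrite mulN1r.
rewrite [X in (_ + X)%R](eq_bigr (fun i => Posz (x i))) => [|i /negbTE ->];
  last by rewrite mul1r.
by rewrite sumrN addrC subr_eq0 -!(big_morph Posz PoszD (erefl (Posz 0))) eqz_nat eq_sym.
Qed.

Lemma ES_le_max_bin m (x : 'I_m -> nat) : (forall i, 0 < x i) ->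
  ES x <= \max_(j < m.+1) 'C(m, j).
Proof.
move=> x_gt0.
have negset_inj : injective (fun e : {ffun 'I_m -> bool} => [set i | e i]).
  by move=> e e' /setP eq_e; apply/ffunP => i; have := eq_e i; rewrite !inE.
rewrite /ES -(card_imset _ negset_inj) -[m in X in _ <= X]card_ord.
apply/sperner/(@equal_weight_antichain _ x) => // _ _ /imsetP[e + ->] /imsetP[e' + ->].
rewrite !inE !sgn_sum_eq0 !big_set => /eqP e_half /eqP e'_half.
by apply: double_inj; rewrite e_half e'_half.
Qed.

Lemma bin_sqr_le_central n j : 'C(n, j) ^ 2 <= 'C(2 * n, n).
Proof.
have [le_jn | lt_nj] := leqP j n; last by rewrite bin_small.
rewrite mul2n -addnn -binomial.Vandermonde (bigD1 (@Ordinal n.+1 j le_jn)) //=.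
by rewrite bin_sub // -mulnn leq_addr.
Qed.

Lemma ES_sqr_le m (x : 'I_m -> nat) : (forall i, 0 < x i) -> ES x ^ 2 <= 'C(2 * m, m).
Proof.
move=> x_gt0; have [|j max_bin] := @bigop.eq_bigmax _ (fun j : 'I_m.+1 => 'C(m, j)).
  by rewrite card_ord.
apply: leq_trans (bin_sqr_le_central m j); rewrite leq_exp2r // -max_bin.
exact: ES_le_max_bin.
Qed.

Lemma dfact_even m : dfact (2 * m) = 2 ^ m * m`!.
Proof.
elim: m => [|m IH] //; rewrite (_ : 2 * m.+1 = (2 * m).+2) /=; last by lia.
by rewrite IH expnS factS; lia.
Qed.

Lemma mul_dfactS k : dfact k.+1 * dfact k = k.+1`!.
Proof. by elim: k => [|k IH] //; rewrite [dfact k.+2]/= -mulnA (mulnC (dfact k)) IH. Qed.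

Lemma dfact_odd_bin m : dfact (2 * m - 1) * 2 ^ m = 'C(2 * m, m) * m`!.
Proof.
have [-> // | m_gt0] := posnP m.
apply/eqP; rewrite -(eqn_pmul2r (fact_gt0 m)) -!mulnA -dfact_even.
have predK : (2 * m - 1).+1 = 2 * m by lia.
rewrite -[in dfact (2 * m)]predK mulnC mul_dfactS predK.
have le_m2m : m <= 2 * m by lia.
by rewrite -(bin_fact le_m2m) (_ : 2 * m - m = m) //; lia.
Qed.

Lemma bin_central_half m : 0 < m -> 'C(2 * m, m) = 2 * 'C(2 * m - 1, m).
Proof.
case: m => [|m] // _; rewrite (_ : 2 * m.+1 = (2 * m).+2); last by lia.
have sym : 'C((2 * m).+1, m) = 'C((2 * m).+1, m.+1).
  by rewrite -bin_sub; [congr 'C(_, _) | ]; lia.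
by rewrite binS sym subn1 /= addnn -mul2n.
Qed.

Local Open Scope ring_scope.

Lemma dfact_ratio (F : numFieldType) m :
  (dfact (2 * m - 1))%:R / (dfact (2 * m))%:R = ('C(2 * m, m))%:R / (2 ^+ m) ^+ 2 :> F.
Proof.
have dfact_neq0 : (dfact (2 * m))%:R != 0 :> F.
  by rewrite pnatr_eq0 dfact_even muln_eq0 expn_eq0 -lt0n fact_gt0.
have two_exp_neq0 : (2 ^+ m) ^+ 2 != 0 :> F by rewrite !expf_neq0 // pnatr_eq0.
apply/eqP; rewrite eqr_div // dfact_even -!natrX -!natrM eqr_nat.
rewrite -mulnn mulnA dfact_odd_bin.
by apply/eqP; lia.
Qed.

Lemma sqrt_dfact_ratio (R : rcfType) m :
  2 ^+ m * Num.sqrt ((dfact (2 * m - 1))%:R / (dfact (2 * m))%:R) =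
  Num.sqrt ('C(2 * m, m))%:R :> R.
Proof.
rewrite dfact_ratio sqrtrM ?ler0n // -exprVn sqrtr_sqr.
rewrite ger0_norm ?invr_ge0 ?exprn_ge0 ?ler0n // mulrCA mulfV ?mulr1 //.
by rewrite expf_neq0 // pnatr_eq0.
Qed.

Lemma natr_le_sqrt (R : rcfType) a b : (a ^ 2 <= b)%N -> a%:R <= Num.sqrt b%:R :> R.
Proof.
by move=> le_ab; rewrite -(ger0_norm (ler0n R a)) -sqrtr_sqr ler_sqrt // -natrX ler_nat.
Qed.

Theorem theorem3 (R : rcfType) :
  (forall (m : nat) (x : 'I_m -> nat),
      (0 < m)%N -> (forall i, (0 < x i)%N) ->
      (ES x)%:R <= 2 ^+ m * Num.sqrt ((dfact (2 * m - 1))%:R / (dfact (2 * m))%:R :> R)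
      /\ 2 ^+ m * Num.sqrt ((dfact (2 * m - 1))%:R / (dfact (2 * m))%:R :> R)
         = Num.sqrt (2 * ('C(2 * m - 1, m))%:R))
  /\ (forall m : nat, (0 < m)%N ->
      (J m)%:R <= Num.sqrt (2 * ('C(2 * m + 1, m + 1))%:R : R)).
Proof.
have ES_le m (x : 'I_m -> nat) : (forall i, 0 < x i)%N ->
    (ES x)%:R <= Num.sqrt ('C(2 * m, m))%:R :> R.
  by move=> x_gt0; apply/natr_le_sqrt/ES_sqr_le.
have sqrt_central m : (0 < m)%N ->
    Num.sqrt ('C(2 * m, m))%:R = Num.sqrt (2 * ('C(2 * m - 1, m))%:R) :> R.
  by move=> m_gt0; rewrite bin_central_half // natrM.
split=> [m x m_gt0 x_gt0 | m _].
  by rewrite sqrt_dfact_ratio -sqrt_central //; split; [exact: ES_le |].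
rewrite (_ : (2 * m + 1 = 2 * m.+1 - 1)%N) ?addn1 -?sqrt_central //; last by lia.
by apply: (ES_le m.+1 (fun i => 'C(m, i))) => i; rewrite bin_gt0 -ltnS.
Qed.
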